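(* Let $q$ be a real number with $|q|<1$, let $\mathcal{A}$ be the algebra of linear operators on $\mathbb{C}[x,s]$, and let $A,B\in\mathcal{A}$ satisfy $BA=qAB$. Then, as an identity of formal power series in a central indeterminate $z$ with coefficients in $\mathcal{A}$, $$e_{q^2}\big(z(A+B)^2\big)=e_{q^2}(zA^2)\,e_q(zAB)\,e_{q^2}(zB^2).$$
   Context: For $|q|<1$, $(x;q)_n=\prod_{j=0}^{n-1}(1-q^jx)$, and $e_q(w)=\sum_{n\ge0}\frac{w^n}{(q;q)_n}$ (interpreted as a formal power series; for an operator argument $w=zC$ this is $\sum_{n\ge 0} \frac{z^nC^n}{(q;q)_n}$). *)

From HB Require Import structures.
From mathcomp Require Import all_boot all_order all_algebra.
Set Implicit Arguments. Unset Strict Implicit. Unset Printing Implicit Defensive.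
Import Order.TTheory GRing.Theory Num.Theory.
Local Open Scope ring_scope.

Definition qpoch (C : pzRingType) (x q : C) (n : nat) : C :=
  \prod_(j < n) (1 - q ^+ j * x).

(* Formal power series in a central indeterminate z with coefficients in
   an algebra A are represented by their coefficient sequences nat -> A. *)

(* e_q(z X) = sum_n z^n X^n / (q;q)_n : coefficient sequence. *)
Definition eq_ser (C : fieldType) (A : algType C) (q : C) (X : A) : nat -> A :=
  fun n => (qpoch q q n)^-1 *: X ^+ n.

Definition ser_mul (C : fieldType) (A : algType C) (f g : nat -> A) : nat -> A :=
  fun n => \sum_(i < n.+1) f i * g (n - i)%N.

From HB Require Import structures.
From mathcomp Require Import all_boot all_order all_algebra.
From mathcomp Require Import ring.
From Stdlib Require Import FunctionalExtensionality.
Set Implicit Arguments. Unset Strict Implicit. Unset Printing Implicit Defensive.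
Import Order.TTheory GRing.Theory Num.Theory.
Local Open Scope ring_scope.

(* Each q-exponential e_c(zv) is the unique series with constant term 1
   satisfying the q-difference equation f(z) - f(cz) = z v f(z).  Since
   ba = q ab, the operators a^2, ab, b^2 q-commute with each other, and so
   moving the summands of (a+b)^2 = a^2 + (1+q) ab + b^2 through the three
   factors turns the q-Leibniz rule into the equation of e_{q^2}(z(a+b)^2)
   for their product; uniqueness concludes.  The middle factor e_q(zab)
   contributes through its q^2-difference, whose extra z^2 term is exactly
   the defect of moving b^2 past e_{q^2}(za^2). *)

Section FormalSeries.
Variables (C : fieldType) (A : algType C).
Implicit Types (c : C) (x : A) (f g h : nat -> A).

(* As series in z: [dilate c f] is f(cz) and [zshift f] is z f(z). *)
Definition dilate c f : nat -> A := fun n => c ^+ n *: f n.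
Definition zshift f : nat -> A := fun n => if n is m.+1 then f m else 0.
Definition lmul x f : nat -> A := fun n => x * f n.
Definition rmul f x : nat -> A := fun n => f n * x.

Lemma ser_mulDl f g h : ser_mul (f \+ g) h = ser_mul f h \+ ser_mul g h.
Proof.
apply: functional_extensionality => n /=; rewrite -big_split.
by apply: eq_bigr => i _; rewrite mulrDl.
Qed.

Lemma ser_mulBl f g h : ser_mul (f \- g) h = ser_mul f h \- ser_mul g h.
Proof.
apply: functional_extensionality => n /=; rewrite -sumrB.
by apply: eq_bigr => i _; rewrite mulrBl.
Qed.

Lemma ser_mulDr f g h : ser_mul h (f \+ g) = ser_mul h f \+ ser_mul h g.
Proof.
apply: functional_extensionality => n /=; rewrite -big_split.
by apply: eq_bigr => i _; rewrite mulrDr.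
Qed.

Lemma ser_mulBr f g h : ser_mul h (f \- g) = ser_mul h f \- ser_mul h g.
Proof.
apply: functional_extensionality => n /=; rewrite -sumrB.
by apply: eq_bigr => i _; rewrite mulrBr.
Qed.

Lemma dilate_ser_mul c f g :
  dilate c (ser_mul f g) = ser_mul (dilate c f) (dilate c g).
Proof.
apply: functional_extensionality => n; rewrite /dilate scaler_sumr.
apply: eq_bigr => i _; rewrite -scalerAr -scalerAl scalerA -exprD.
by rewrite subnK // -ltnS.
Qed.

Lemma ser_mul_zshiftl f g : ser_mul (zshift f) g = zshift (ser_mul f g).
Proof.
apply: functional_extensionality => -[|n].
  by rewrite /ser_mul big_ord1 mul0r.
by rewrite /ser_mul big_ord_recl /= mul0r add0r.
Qed.

Lemma ser_mul_zshiftr f g : ser_mul f (zshift g) = zshift (ser_mul f g).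
Proof.
apply: functional_extensionality => -[|n].
  by rewrite /ser_mul big_ord1 mulr0.
rewrite /ser_mul big_ord_recr /= subnn mulr0 addr0.
by apply: eq_bigr => i _; rewrite subSn // -ltnS.
Qed.

Lemma lmulDl x y f : lmul (x + y) f = lmul x f \+ lmul y f.
Proof. by apply: functional_extensionality => n; rewrite /lmul mulrDl. Qed.

Lemma zshiftD f g : zshift (f \+ g) = zshift f \+ zshift g.
Proof. by apply: functional_extensionality => -[|n] /=; rewrite ?addr0. Qed.

Lemma lmul_ser_mul x f g : lmul x (ser_mul f g) = ser_mul (lmul x f) g.
Proof.
apply: functional_extensionality => n; rewrite /lmul mulr_sumr.
by apply: eq_bigr => i _; rewrite mulrA.
Qed.

Lemma rmul_ser_mul f g x : rmul (ser_mul f g) x = ser_mul f (rmul g x).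
Proof.
apply: functional_extensionality => n; rewrite /rmul mulr_suml.
by apply: eq_bigr => i _; rewrite mulrA.
Qed.

Lemma ser_mul_rmul_lmul f g x : ser_mul (rmul f x) g = ser_mul f (lmul x g).
Proof.
apply: functional_extensionality => n.
by apply: eq_bigr => i _; rewrite /rmul /lmul mulrA.
Qed.

Lemma ser_mul_qdiff c f g :
  ser_mul f g \- dilate c (ser_mul f g) =
  ser_mul (f \- dilate c f) g \+ ser_mul (dilate c f) (g \- dilate c g).
Proof.
rewrite dilate_ser_mul ser_mulBl ser_mulBr.
by apply: functional_extensionality => n /=; rewrite addrA subrK.
Qed.

End FormalSeries.

Section QExponential.
Variables (C : fieldType) (A : algType C).
Implicit Types (c : C) (u v : A).

Lemma eq_ser0 c v : eq_ser c v 0 = 1.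
Proof. by rewrite /eq_ser /qpoch big_ord0 invr1 scale1r expr0. Qed.

Lemma eq_serS c v n : c ^+ n.+1 != 1 ->
  (1 - c ^+ n.+1) *: eq_ser c v n.+1 = v * eq_ser c v n.
Proof.
move=> cn1; rewrite /eq_ser /qpoch big_ord_recr /= -exprSr scalerA invfM mulrCA.
by rewrite divff ?subr_eq0 1?eq_sym // mulr1 -scalerAr exprS.
Qed.

Lemma qcomm_exprr u v c : u * v = c *: (v * u) ->
  forall n, u * v ^+ n = c ^+ n *: (v ^+ n * u).
Proof.
move=> uv; elim=> [|n IHn]; first by rewrite !expr0 mulr1 mul1r scale1r.
rewrite exprSr mulrA IHn -scalerAl -[_ * u * v]mulrA uv -scalerAr scalerA.
by rewrite mulrA -!exprSr.
Qed.

Lemma qcomm_exprl u v c :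
  u * v = c *: (v * u) -> forall n, u ^+ n * v = c ^+ n *: (v * u ^+ n).
Proof.
move=> uv; elim=> [|n IHn]; first by rewrite !expr0 mulr1 mul1r scale1r.
rewrite exprS -mulrA IHn -scalerAr [in LHS]mulrA uv -scalerAl scalerA mulrA.
by rewrite -exprSr exprS.
Qed.

Lemma qcomm_eq_ser u v c d : u * v = c *: (v * u) ->
  lmul u (eq_ser d v) = rmul (dilate c (eq_ser d v)) u.
Proof.
move=> uv; apply: functional_extensionality => n.
rewrite /lmul /rmul /dilate /eq_ser -scalerAr (qcomm_exprr uv).
by rewrite -!scalerAl !scalerA mulrC.
Qed.

Section NotRootOfUnity.
Variable c : C.
Hypothesis c_neq1 : forall k, c ^+ k.+1 != 1.

Lemma eq_ser_qdiff v :
  eq_ser c v \- dilate c (eq_ser c v) = zshift (lmul v (eq_ser c v)).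
Proof.
apply: functional_extensionality => -[|n]; rewrite /= /dilate /lmul.
  by rewrite expr0 scale1r subrr.
by rewrite -eq_serS // scalerBl scale1r.
Qed.

Lemma qdiff_eq_ser v f : f 0%N = 1 ->
  f \- dilate c f = zshift (lmul v f) -> f = eq_ser c v.
Proof.
move=> f0 fS; apply: functional_extensionality; elim=> [|n IHn].
  by rewrite f0 eq_ser0.
apply: (scalerI (_ : 1 - c ^+ n.+1 != 0)); first by rewrite subr_eq0 eq_sym.
have := congr1 (fun g => g n.+1) fS; rewrite /= /dilate /lmul => fSn.
by rewrite eq_serS // -IHn scalerBl scale1r fSn.
Qed.

Lemma eq_ser_qdiff_sqr v :
  eq_ser c v \- dilate (c ^+ 2) (eq_ser c v) =
  zshift (lmul ((1 + c) *: v) (eq_ser c v)) \+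
  zshift (zshift (lmul (- (c *: (v * v))) (eq_ser c v))).
Proof.
(* Uses 1 - c^(2n) = (1 + c^n)(1 - c^n) and then the recurrence twice. *)
set e := eq_ser c v.
have rec n : (1 - c ^+ n.+1) *: e n.+1 = v * e n by apply: eq_serS.
clearbody e.
apply: functional_extensionality => -[|[|n]]; rewrite /= /dilate /lmul.
- by rewrite expr0 scale1r subrr addr0.
- transitivity ((1 + c) *: (v * e 0%N)); last by rewrite scalerAl addr0.
  rewrite -rec scalerA -{1}[e 1%N]scale1r -scalerBl.
  by congr (_ *: _); ring.
- have dil_e : c ^+ n.+1 *: e n.+1 = e n.+1 - v * e n.
    by rewrite -rec scalerBl scale1r opprB addrC subrK.
  transitivity ((1 + c ^+ n.+2) *: (v * e n.+1)).
    rewrite -rec scalerA -{1}[e n.+2]scale1r -scalerBl.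
    by congr (_ *: _); rewrite exprAC; ring.
  rewrite scalerDl scale1r exprS -scalerA scalerAr dil_e.
  rewrite mulrBr scalerBr scalerDl scale1r mulrDl mulNr -!scalerAl mulrA.
  by rewrite addrA.
Qed.

End NotRootOfUnity.
End QExponential.

Section Factorisation.
Variables (C : fieldType) (A : algType C) (q : C) (a b : A).
Hypothesis hab : b * a = q *: (a * b).
Hypothesis q_neq1 : forall k, q ^+ k.+1 != 1.

Local Notation p := (q ^+ 2).
Local Notation X := (a ^+ 2).
Local Notation Y := (a * b).
Local Notation W := (b ^+ 2).
Local Notation Z := ((a + b) ^+ 2).
Local Notation E := (eq_ser p X).
Local Notation F := (eq_ser q Y).
Local Notation G := (eq_ser p W).

Let p_neq1 k : p ^+ k.+1 != 1.
Proof. by rewrite -exprM mulnS addSn; apply: q_neq1. Qed.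

Let bX : b * X = p *: (X * b).
Proof. exact: qcomm_exprr. Qed.

Let YX : Y * X = p *: (X * Y).
Proof. by rewrite -mulrA bX -scalerAr !mulrA. Qed.

Let WX : W * X = p ^+ 2 *: (X * W).
Proof. exact: qcomm_exprl bX 2. Qed.

Let WY : W * Y = p *: (Y * W).
Proof. by rewrite mulrA (qcomm_exprl hab 2) -scalerAl !mulrA. Qed.

Let YY : Y * Y = q *: (X * W).
Proof.
by rewrite -mulrA [b * (a * b)]mulrA hab -scalerAl -scalerAr !mulrA.
Qed.

Let Z_expand : Z = X + (1 + q) *: Y + W.
Proof. by rewrite expr2 mulrDl !mulrDr hab scalerDl scale1r -!expr2 !addrA. Qed.

Let mulWE : lmul W E =
  zshift (rmul (dilate p E) (- (q *: (Y * Y)))) \+ rmul (dilate p E) W.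
Proof.
rewrite (qcomm_eq_ser p WX); set e := E.
have eX n : e n * X = (1 - p ^+ n.+1) *: e n.+1.
  by rewrite eq_serS ?p_neq1 // /e /eq_ser -scalerAl -scalerAr -exprSr -exprS.
clearbody e.
apply: functional_extensionality => -[|n]; rewrite /= /rmul /dilate.
  by rewrite !expr0 !scale1r add0r.
rewrite YY mulrN -!scalerAr -!scalerAl [e n * _]mulrA eX -scalerAl !scalerA.
rewrite -scaleNr -scalerDl.
by congr (_ *: _); rewrite exprAC [p ^+ n.+1]exprS; ring.
Qed.

Let mulZE : lmul Z E =
  lmul X E \+ rmul (dilate p E) ((1 + q) *: Y) \+
  (zshift (rmul (dilate p E) (- (q *: (Y * Y)))) \+ rmul (dilate p E) W).
Proof.
have YE : lmul ((1 + q) *: Y) E = rmul (dilate p E) ((1 + q) *: Y).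
  by apply: qcomm_eq_ser; rewrite -scalerAl YX -scalerAr !scalerA mulrC.
by rewrite Z_expand !lmulDl YE mulWE.
Qed.

Let qdiff_EF :
  ser_mul E F \- dilate p (ser_mul E F) \+
    zshift (rmul (dilate p (ser_mul E F)) W) =
  zshift (lmul Z (ser_mul E F)).
Proof.
rewrite ser_mul_qdiff (eq_ser_qdiff p_neq1) (eq_ser_qdiff_sqr q_neq1).
rewrite dilate_ser_mul rmul_ser_mul -(qcomm_eq_ser q WY) -ser_mul_rmul_lmul.
rewrite lmul_ser_mul mulZE ser_mulDr !ser_mul_zshiftr -!ser_mul_rmul_lmul.
rewrite !ser_mulDl !ser_mul_zshiftl !zshiftD.
by apply: functional_extensionality => n /=; rewrite !addrA.
Qed.

Let qdiff_EFG :
  ser_mul (ser_mul E F) G \- dilate p (ser_mul (ser_mul E F) G) =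
  zshift (lmul Z (ser_mul (ser_mul E F) G)).
Proof.
rewrite ser_mul_qdiff (eq_ser_qdiff p_neq1) ser_mul_zshiftr -ser_mul_rmul_lmul.
by rewrite -ser_mul_zshiftl -ser_mulDl qdiff_EF ser_mul_zshiftl -lmul_ser_mul.
Qed.

Theorem eq_ser_factorisation : ser_mul (ser_mul E F) G = eq_ser p Z.
Proof.
apply: (qdiff_eq_ser p_neq1); last exact: qdiff_EFG.
by rewrite /ser_mul !big_ord1 !eq_ser0 !mulr1.
Qed.

End Factorisation.

Lemma expr_neq1_norm_lt1 (R : numDomainType) (x : R) n :
  `|x| < 1 -> x ^+ n.+1 != 1.
Proof.
move=> x_lt1; apply/eqP => xn1.
by have := exprn_ilt1 n.+1 (normr_ge0 x) x_lt1; rewrite -normrX xn1 normr1 ltxx.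
Qed.

Theorem lemma1p1 (C : numClosedFieldType) (A : algType C) (q : C)
    (hqreal : q \is Num.real) (hq : `|q| < 1)
    (a b : A) (hab : b * a = q *: (a * b)) :
  forall n : nat,
    eq_ser (q ^+ 2) ((a + b) ^+ 2) n =
    ser_mul (ser_mul (eq_ser (q ^+ 2) (a ^+ 2)) (eq_ser q (a * b)))
            (eq_ser (q ^+ 2) (b ^+ 2)) n.
Proof.
have q_neq1 k : q ^+ k.+1 != 1 by exact: expr_neq1_norm_lt1.
by move=> n; rewrite (eq_ser_factorisation hab q_neq1).
Qed.
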